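(* Let $C$ be a strictly convex cone in a topological real vector space $V$ such that the interior of $C$ in $V$ is non-empty and $C\neq V$. Then $V$ is one-dimensional and $C\cup\{0\}$ is a ray, i.e. $C\cup\{0\}=\{tx: t\ge 0\}$ for some non-zero $x\in V$.
   Context: Topological real vector spaces are not assumed Hausdorff. A cone is a subset $C$ with $\lambda C\subseteq C$ for all $\lambda>0$ (it may or may not contain $0$). For a subset $S$, $\mathrm{Aff}(S)$ is its affine hull; $\mathrm{ri}(S)$, $\mathrm{rc}(S)$ are the interior and closure of $S$ in the subspace topology of $\mathrm{Aff}(S)$. $]x,y[=\{(1-t)x+ty: t\in[0,1]\}\setminus\{x,y\}$. A set $C$ is strictly convex if for any two distinct $x,y\in\mathrm{rc}(C)$, $]x,y[\subseteq\mathrm{ri}(C)$. *)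

From HB Require Import structures.
From mathcomp Require Import all_boot all_order all_algebra.
From mathcomp Require Import all_classical all_reals all_analysis.
Set Implicit Arguments. Unset Strict Implicit. Unset Printing Implicit Defensive.
Import Order.TTheory GRing.Theory Num.Theory.
Local Open Scope classical_set_scope.
Local Open Scope ring_scope.

(* Real topological vector spaces: [V : topologicalLmodType R] with
   [R : realType]; the topology is NOT assumed Hausdorff. *)

Section ConvexDefs.
Context {R : realType} {V : topologicalLmodType R}.

Definition is_cone (C : set V) : Prop :=
  forall (l : R) (x : V), 0 < l -> C x -> C (l *: x).

Definition aff_hull (S : set V) : set V :=
  [set v | exists (n : nat) (a : 'I_n -> R) (p : 'I_n -> V),
      [/\ \sum_(i < n) a i = 1, (forall i, S (p i)) & v = \sum_(i < n) a i *: p i]].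

(* relative interior: interior of S in the subspace topology of Aff(S) *)
Definition rel_interior (S : set V) : set V :=
  [set x | S x /\ exists U : set V, [/\ open U, U x & U `&` aff_hull S `<=` S]].

(* relative closure: closure of S in the subspace topology of Aff(S) *)
Definition rel_closure (S : set V) : set V :=
  [set x | aff_hull S x /\
     forall U : set V, open U -> U x -> exists y, [/\ U y, aff_hull S y & S y]].

Definition open_segment (x y : V) : set V :=
  [set z | (exists t : R, [/\ 0 <= t, t <= 1 & z = (1 - t) *: x + t *: y])
           /\ z <> x /\ z <> y].

Definition strictly_convex (C : set V) : Prop :=
  forall x y : V, rel_closure C x -> rel_closure C y -> x <> y ->
    open_segment x y `<=` rel_interior C.

End ConvexDefs.

(* Since C has interior points, its affine hull is V, so relative interior and
   closure are the usual ones.  A nonzero boundary point z would give an open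
   segment ]z, 2z[ in the interior, whence z itself is interior; and 0 is not
   interior, or else C = V.  For x interior, -x is not in the closure (0 would
   be on ]x, -x[).  If some v were not a multiple of x, the curve
   (1-2s)x + 4s(1-s)v from x to -x would avoid 0, so the interior would be
   relatively clopen along it and contain -x. *)
From HB Require Import structures.
From mathcomp Require Import all_boot all_order all_algebra.
From mathcomp Require Import all_classical all_reals all_analysis.
From mathcomp Require Import ring lra.

Set Implicit Arguments.
Unset Strict Implicit.
Unset Printing Implicit Defensive.

Import Order.TTheory GRing.Theory Num.Theory numFieldNormedType.Exports.

Local Open Scope classical_set_scope.
Local Open Scope ring_scope.

Section TvsFacts.
Context {R : realType} {V : topologicalLmodType R}.

Lemma cvgZ_tvs {T : Type} (F : set_system T) {FF : Filter F}
    (s : T -> R) (f : T -> V) (k : R) (a : V) :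
  s @ F --> k -> f @ F --> a -> (fun x => s x *: f x) @ F --> k *: a.
Proof. by apply: continuous2_cvg; exact: (@scale_continuous _ V (k, a)). Qed.

Lemma cvgD_tvs {T : Type} (F : set_system T) {FF : Filter F}
    (f g : T -> V) (a b : V) :
  f @ F --> a -> g @ F --> b -> (fun x => f x + g x) @ F --> a + b.
Proof. by apply: continuous2_cvg; exact: (@add_continuous V (a, b)). Qed.

Lemma continuous_scaler (c : R) : continuous (fun w : V => c *: w).
Proof. by move=> w; apply: cvgZ_tvs; [exact: cvg_cst | exact: cvg_id]. Qed.

Lemma nbhs0_exists_pos (P : set R) : nbhs 0 P -> exists2 e : R, 0 < e & P e.
Proof.
move=> /nbhs_ballP [e /= e0 He]; exists (e / 2); first by rewrite divr_gt0.
by apply: He; rewrite /ball /= sub0r normrN gtr0_norm ?divr_gt0 //; lra.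
Qed.

Lemma interior_step (S : set V) (x v : V) :
  interior S x -> exists2 e : R, 0 < e & S (x + e *: v).
Proof.
move=> Sx; apply: (@nbhs0_exists_pos (fun e => S (x + e *: v))).
have cont : (fun e : R => x + e *: v) @ 0 --> x + 0 *: v.
  by apply: cvgD_tvs; [exact: cvg_cst | apply: cvgZ_tvs; [exact: cvg_id | exact: cvg_cst]].
by apply: cont; rewrite scale0r addr0.
Qed.

Lemma aff_hull_setT (S : set V) : interior S !=set0 -> aff_hull S = setT.
Proof.
move=> [x Sx]; apply/seteqP; split => // v _.
have [e e0 Se] := interior_step (v - x) Sx.
exists 2%N, (fun i : 'I_2 => [:: e^-1; 1 - e^-1]`_i),
  (fun i : 'I_2 => [:: x + e *: (v - x); x]`_i); split.
- by rewrite !big_ord_recl big_ord0 /= addr0 subrKC.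
- by case=> [[|[|]] ?] //=; exact: interior_subset.
- rewrite !big_ord_recl big_ord0 /= addr0 scalerDr scalerA mulVf ?gt_eqF //.
  by rewrite scale1r scalerBl scale1r addrC addrA subrK subrKC.
Qed.

Lemma closure_sub_rel_closure (S : set V) :
  interior S !=set0 -> closure S `<=` rel_closure S.
Proof.
move=> /aff_hull_setT affT y Sy; split; first by rewrite affT.
move=> U oU Uy; have [w [Sw Uw]] := Sy U (open_nbhs_nbhs (conj oU Uy)).
by exists w; rewrite affT.
Qed.

Lemma rel_interior_sub_interior (S : set V) :
  interior S !=set0 -> rel_interior S `<=` interior S.
Proof.
move=> /aff_hull_setT affT y [_ [U [oU Uy US]]].
apply: (filterS _ (open_nbhs_nbhs (conj oU Uy))) => w Uw.
by apply: US; rewrite affT.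
Qed.

Lemma strictly_convex_segment_interior (S : set V) (x y : V) :
  strictly_convex S -> interior S !=set0 -> closure S x -> closure S y ->
  x <> y -> open_segment x y `<=` interior S.
Proof.
move=> sS S0 Sx Sy xy z /(sS x y) zS; apply: rel_interior_sub_interior => //.
by apply: zS => //; exact: closure_sub_rel_closure.
Qed.

Lemma scaler_neq (a b : R) (z : V) : a != b -> z != 0 -> a *: z != b *: z.
Proof.
by move=> ab z0; rewrite -subr_eq0 -scalerBl scaler_eq0 subr_eq0 negb_or ab.
Qed.

Lemma open_segment_midpoint_line (a b : R) (z : V) : a != b -> z != 0 ->
  open_segment (a *: z) (b *: z) (((a + b) / 2) *: z).
Proof.
move=> ab z0; split.
  exists (1 / 2); split; [lra | lra |].
  by rewrite !scalerA -scalerDl; congr (_ *: _); field.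
split; apply/eqP; apply: scaler_neq => //; apply/negP => /eqP;
  move: ab => /eqP; lra.
Qed.

Lemma scaler_indep (a b : R) (x v : V) : x != 0 ->
  (forall t : R, v <> t *: x) -> a *: x + b *: v = 0 -> a = 0 /\ b = 0.
Proof.
move=> x0 vx abv.
have b0 : b = 0.
  apply: contrapT => /eqP b0; apply: (vx (- a / b)).
  apply: (scalerI b0); rewrite scalerA mulrCA divff // mulr1 scaleNr.
  by apply/eqP; rewrite -addr_eq0 addrC abv.
by move: abv; rewrite b0 scale0r addr0 => /eqP; rewrite scaler_eq0 (negbTE x0) orbF => /eqP.
Qed.

Lemma connected_path_interior (S : set V) (g : R -> V) : continuous g ->
  (forall s, closure S (g s) -> interior S (g s)) -> interior S (g 0) ->
  forall s, interior S (g s).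
Proof.
move=> gcont clint S0 s.
have connT : connected [set: R] by apply/connected_intervalP.
suff /seteqP[_ /(_ s I)] : g @^-1` interior S = [set: R] by [].
apply: connT; first by exists 0.
- exists (g @^-1` interior S); last by rewrite setTI.
  by apply: open_comp => [t _|]; [exact: gcont | exact: open_interior].
- exists (g @^-1` closure S).
    by apply: preimage_closed => [t _|]; [exact: gcont | exact: closed_closure].
  rewrite setTI; apply/seteqP; split => t /=; last exact: clint.
  by move=> /interior_subset /subset_closure.
Qed.

End TvsFacts.

Section Cone.
Context {R : realType} {V : topologicalLmodType R}.
Variable C : set V.
Hypothesis coneC : is_cone C.

Lemma cone_interiorZ (c : R) (x : V) : 0 < c -> interior C x -> interior C (c *: x).
Proof.
move=> c0 Cx; have c0' : c != 0 by rewrite gt_eqF.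
have : nbhs (c^-1 *: (c *: x)) C by rewrite scalerA mulVf // scale1r.
move=> /(continuous_scaler (c := c^-1)) nearC.
apply: (@filterS _ (nbhs (c *: x)) _ ((fun w => c^-1 *: w) @^-1` C)) nearC => w /= Cw.
by move: (coneC c0 Cw); rewrite scalerA divff // scale1r.
Qed.

Lemma cone_closureZ (c : R) (x : V) : 0 < c -> closure C x -> closure C (c *: x).
Proof.
move=> c0 Cx B /(continuous_scaler (c := c)) /Cx [y [Cy By]].
by exists (c *: y); split => //; exact: coneC.
Qed.

Lemma cone_interior0 : interior C 0 -> C = setT.
Proof.
move=> C0; apply/seteqP; split => // v _.
have [e e0] := interior_step v C0; rewrite add0r => Cev.
have e0' : 0 < e^-1 by rewrite invr_gt0.
by move: (coneC e0' Cev); rewrite scalerA mulVf ?gt_eqF // scale1r.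
Qed.

Hypothesis sconvC : strictly_convex C.
Hypothesis C0 : interior C !=set0.

(* (3/2)z lies on ]z, 2z[, hence in the interior; scale back by 2/3. *)
Lemma cone_closure_interior (z : V) : closure C z -> z != 0 -> interior C z.
Proof.
move=> Cz z0.
have two_z : closure C (2 *: z) by apply: cone_closureZ.
have one_two : (1 : R) != 2 by rewrite (eqr_nat R 1 2).
have seg := open_segment_midpoint_line one_two z0; rewrite scale1r in seg.
have z2z : z <> 2 *: z by apply/eqP; rewrite -{1}[z]scale1r scaler_neq.
have := strictly_convex_segment_interior sconvC C0 Cz two_z z2z seg.
move=> /(cone_interiorZ (c := 2 / 3)); rewrite scalerA.
by rewrite (_ : 2 / 3 * ((1 + 2) / 2) = 1 :> R) ?scale1r; [apply; lra | field].
Qed.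

Hypothesis C_neqT : C <> setT.

Lemma cone_interior_neq0 (x : V) : interior C x -> x != 0.
Proof. by apply: contraPN => /eqP ->; apply: contra_not C_neqT; exact: cone_interior0. Qed.

Lemma cone_notin_closureN (x : V) : interior C x -> ~ closure C (- x).
Proof.
move=> Cx CNx; apply/C_neqT/cone_interior0.
have x0 := cone_interior_neq0 Cx.
have one_m1 : (1 : R) != -1 by rewrite -subr_eq0 opprK (eqr_nat R 2 0).
have seg := open_segment_midpoint_line one_m1 x0.
rewrite scale1r scaleN1r subrr mul0r scale0r in seg.
have xNx : x <> - x by apply/eqP; rewrite -scaleN1r -{1}[x]scale1r scaler_neq.
apply: (strictly_convex_segment_interior sconvC C0 _ CNx xNx seg).
exact: subset_closure (interior_subset Cx).
Qed.

Lemma cone_span_interior (x : V) : interior C x ->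
  forall v : V, exists t : R, v = t *: x.
Proof.
move=> Cx v; apply: contrapT => /forallNP vx.
have x0 := cone_interior_neq0 Cx.
pose g s : V := (1 - 2 * s) *: x + (4 * s * (1 - s)) *: v.
have gcont : continuous g.
  move=> s; apply: cvgD_tvs; apply: cvgZ_tvs => //; try exact: cvg_cst.
    by apply: cvgB; [exact: cvg_cst | apply: cvgM; [exact: cvg_cst | exact: cvg_id]].
  apply: cvgM; first by apply: cvgM; [exact: cvg_cst | exact: cvg_id].
  by apply: cvgB; [exact: cvg_cst | exact: cvg_id].
have g_neq0 s : g s != 0.
  apply/eqP => /(scaler_indep x0 vx) [a0 b0]; move: b0; nra.
have : interior C (g 1).
  apply: (connected_path_interior gcont) => [s /cone_closure_interior|]; first exact.
  by rewrite /g !(mulr0, subr0, mul0r, scale0r, addr0, scale1r).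
rewrite /g subrr !mulr0 scale0r addr0 mulr1 (_ : 1 - 2 = -1 :> R) ?scaleN1r; last lra.
by move=> /interior_subset /subset_closure; exact: cone_notin_closureN.
Qed.

Lemma cone_ray (x : V) : interior C x ->
  C `|` [set 0] = [set t *: x | t in [set t : R | 0 <= t]].
Proof.
move=> Cx; apply/seteqP; split => [c [Cc|->]|c [t /= t0 <-]].
- have [t ct] := cone_span_interior Cx c; exists t => //=.
  rewrite leNgt; apply/negP => t0; apply: (cone_notin_closureN Cx).
  apply: subset_closure; have := coneC (l := - t^-1) _ Cc.
  by rewrite ct scalerA mulNr mulVf ?ltr0_neq0 // scaleN1r; apply; rewrite oppr_gt0 invr_lt0.
- by exists 0; rewrite /= ?scale0r.
- have [->|t_neq0] := eqVneq t 0; first by right; rewrite scale0r.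
  by left; apply: coneC (interior_subset Cx); rewrite lt_def t_neq0.
Qed.

End Cone.

Theorem mainTheorem12 (R : realType) (V : topologicalLmodType R) (C : set V) :
  is_cone C -> strictly_convex C -> interior C !=set0 -> C <> setT ->
  (exists e : V, e <> 0 /\ forall v : V, exists t : R, v = t *: e) /\
  (exists x : V, x <> 0 /\ C `|` [set 0] = [set t *: x | t in [set t : R | 0 <= t]]).
Proof.
move=> coneC sconvC C0 C_neqT; have [x Cx] := C0.
have /eqP x0 := cone_interior_neq0 coneC C_neqT Cx.
split; exists x; split => //.
  exact (cone_span_interior coneC sconvC C0 C_neqT Cx).
exact (cone_ray coneC sconvC C0 C_neqT Cx).
Qed.
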